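(* Let $n\ge 2$ be even. Then each of the $n$ cusps of $F_n$ lying above $\infty$ (the points $(X:Y:0)$ of $F_n$) is ramified in the cover $C_n\to F_n$ with ramification index exactly $2$. Equivalently, every point of $C_n$ above $\infty$ has ramification index $2n$ in the cover $C_n\to C_n/H_n\cong\mathbb{P}^1$.
   Context: $\Delta=\langle a,b\rangle\subset\mathrm{SL}(2,\mathbb{Z})$ with $a=\begin{pmatrix}1&2\\0&1\end{pmatrix}$, $b=\begin{pmatrix}1&0\\2&1\end{pmatrix}$; $H_n$ is the Heisenberg group of upper unitriangular $3\times3$ matrices over $\mathbb{Z}/n\mathbb{Z}$ generated by $a_H=I+E_{12}$, $b_H=I+E_{23}$, with center $Z_n$. $\phi:\Delta\to H_n$, $a\mapsto a_H$, $b\mapsto b_H$; $\psi:\Delta\to(\mathbb{Z}/n\mathbb{Z})^2$, $a\mapsto(1,0)$, $b\mapsto(0,1)$. $C_n$ (Heisenberg curve) and $F_n$ (Fermat curve) are the compactifications by cusps of $\ker\phi\backslash\mathbb{H}$ and $\ker\psi\backslash\mathbb{H}$; $C_n\to F_n$ is Galois with group $Z_n$ and $C_n\to\mathbb{P}^1=\Delta\backslash\mathbb{H}\cup\{\text{cusps}\}$ is Galois with group $H_n$. $F_n$ is identified with the projective curve $X^n+Y^n=Z^n$, the map $F_n\to\mathbb{P}^1$ being $(X:Y:Z)\mapsto(X/Z)^n$. *)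

From HB Require Import structures.
From mathcomp Require Import all_boot all_order all_algebra.
Set Implicit Arguments. Unset Strict Implicit. Unset Printing Implicit Defensive.
Import GRing.Theory.
Local Open Scope ring_scope.

Definition mA  : 'M[int]_2 := 1%:M + delta_mx ord0 ord_max *+ 2.
Definition mAi : 'M[int]_2 := 1%:M - delta_mx ord0 ord_max *+ 2.
Definition mB  : 'M[int]_2 := 1%:M + delta_mx ord_max ord0 *+ 2.
Definition mBi : 'M[int]_2 := 1%:M - delta_mx ord_max ord0 *+ 2.

(* A word in the free group on {a, b}: a letter is (is_b, is_inverse). *)
Definition word := seq (bool * bool).

Definition letterD (l : bool * bool) : 'M[int]_2 :=
  match l with
  | (false, false) => mA | (false, true) => mAi
  | (true, false) => mB  | (true, true) => mBi
  end.

(* Every element of Delta = <a,b> is evalD w for some word w. *)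
Definition evalD (w : word) : 'M[int]_2 :=
  foldr (fun l M => letterD l *m M) 1%:M w.

Definition aH  (n : nat) : 'M['Z_n]_3 := 1%:M + delta_mx 0 1.
Definition aHi (n : nat) : 'M['Z_n]_3 := 1%:M - delta_mx 0 1.
Definition bH  (n : nat) : 'M['Z_n]_3 := 1%:M + delta_mx 1 2.
Definition bHi (n : nat) : 'M['Z_n]_3 := 1%:M - delta_mx 1 2.

Definition letterH (n : nat) (l : bool * bool) : 'M['Z_n]_3 :=
  match l with
  | (false, false) => aH n | (false, true) => aHi n
  | (true, false) => bH n  | (true, true) => bHi n
  end.

(* phi : Delta -> H_n, a |-> a_H, b |-> b_H (Delta is free on a, b). *)
Definition phiw (n : nat) (w : word) : 'M['Z_n]_3 :=
  foldr (fun l M => letterH n l *m M) 1%:M w.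

Definition letterP (n : nat) (l : bool * bool) : 'Z_n * 'Z_n :=
  match l with
  | (false, false) => (1, 0) | (false, true) => (-1, 0)
  | (true, false) => (0, 1)  | (true, true) => (0, -1)
  end.

Definition psiw (n : nat) (w : word) : 'Z_n * 'Z_n :=
  foldr (fun l p => ((letterP n l).1 + p.1, (letterP n l).2 + p.2)) (0, 0) w.

(* Points of P^1(Q) represented by nonzero integer column vectors (x : y);
   g fixes the cusp [v] iff g v is proportional to v. *)
Definition fixes (g : 'M[int]_2) (v : 'cV[int]_2) : bool :=
  (g *m v) ord0 ord0 * v ord_max ord0 == (g *m v) ord_max ord0 * v ord0 ord0.

(* The cusp of Delta\H* sent to infinity by the identification with P^1
   (x = X/Z, lambda = x^n): the cusp 1 = (1 : 1). *)
Definition cusp_inf : 'cV[int]_2 := \col_(i < 2) 1.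

Definition has_card (T : finType) (P : T -> Prop) (k : nat) : Prop :=
  exists S : {set T}, (forall x, x \in S <-> P x) /\ #|S| = k.

(* Ramification index at the cusp s of C_n over P^1 = Delta\H*:
   [Delta_s : (ker phi)_s] = #|phi(Delta_s)|. *)
Definition ram_C_P1 (n : nat) (s : 'cV[int]_2) (k : nat) : Prop :=
  has_card (fun x : 'M['Z_n]_3 => exists w : word, fixes (evalD w) s /\ phiw n w = x) k.

(* Ramification index at the cusp s of C_n over F_n:
   [(ker psi)_s : (ker phi)_s] = #|phi((ker psi)_s)|. *)
Definition ram_C_F (n : nat) (s : 'cV[int]_2) (k : nat) : Prop :=
  has_card (fun x : 'M['Z_n]_3 =>
    exists w : word, fixes (evalD w) s /\ psiw n w = (0, 0) /\ phiw n w = x) k.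

(* Delta is free on a and b (ping-pong on Z^2), so phi and psi are read off
   the matrix of a word.  The stabiliser of the cusp 1 = (1 : 1) in Delta
   consists of the matrices (-1)^j (1 - 2j, 2j; -2j, 1 + 2j), j in Z, i.e. of
   the powers of q = b a^-1; the stabiliser of the cusp g.1 is its conjugate by g.
   In H_n, phi(q) = 1 + N with N^3 = 0, so phi(q)^j has entries -j at (1, 2)
   and -C(j, 2) at (1, 3); for n even, n does not divide C(n, 2), hence
   phi(q) has order 2n.  Since psi(q^j) = (-j, j), the stabiliser in ker psi
   is generated by q^n, whose image phi(q)^n has order 2. *)

From mathcomp Require Import all_boot all_order all_algebra.
From mathcomp Require Import zify ring.
Set Implicit Arguments.
Unset Strict Implicit.
Import GRing.Theory.
Local Open Scope ring_scope.

Definition linv (l : bool * bool) : bool * bool := (l.1, ~~ l.2).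
Definition winv (w : word) : word := rev (map linv w).

Lemma linvK : involutive linv.
Proof. by case=> b c; rewrite /linv negbK. Qed.

Lemma winv_cons l w : winv (l :: w) = winv w ++ [:: linv l].
Proof. by rewrite /winv /= rev_cons cats1. Qed.

Lemma winvK : involutive winv.
Proof. by move=> w; rewrite /winv map_rev revK -map_comp (eq_map linvK) map_id. Qed.

Definition act_letter (l : bool * bool) (p : int * int) : int * int :=
  match l with
  | (false, false) => (p.1 + 2 * p.2, p.2)
  | (false, true) => (p.1 - 2 * p.2, p.2)
  | (true, false) => (p.1, 2 * p.1 + p.2)
  | (true, true) => (p.1, p.2 - 2 * p.1)
  end.

Definition act_word (w : word) (p : int * int) : int * int := foldr act_letter p w.

Definition colv (p : int * int) : 'cV[int]_2 :=
  \col_(i < 2) (if i == ord0 then p.1 else p.2).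

Lemma letterD_colv l p : letterD l *m colv p = colv (act_letter l p).
Proof.
apply/matrixP => i j; rewrite !mxE big_ord_recl big_ord1 !mxE.
case: l => [[] []]; case: p => x y /=;
case: i => [[|[|k]] hi] //=; rewrite /mA /mAi /mB /mBi !mxE /=; lia.
Qed.

Lemma evalD_colv w p : evalD w *m colv p = colv (act_word w p).
Proof.
elim: w => [|l w IH] /=; first by rewrite mul1mx.
by rewrite -mulmxA IH letterD_colv.
Qed.

Lemma act_word_cat u v p : act_word (u ++ v) p = act_word u (act_word v p).
Proof. exact: foldr_cat. Qed.

Lemma act_word_cons l w p : act_word (l :: w) p = act_letter l (act_word w p).
Proof. by []. Qed.

Lemma act_letterK l : cancel (act_letter l) (act_letter (linv l)).
Proof. by case: l => [[] []] [x y] /=; congr pair; lia. Qed.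

Lemma act_word_cancel u l v p :
  act_word (u ++ l :: linv l :: v) p = act_word (u ++ v) p.
Proof. by rewrite !act_word_cat !act_word_cons -{1}(linvK l) act_letterK. Qed.

Lemma act_wordK w : cancel (act_word w) (act_word (winv w)).
Proof.
elim: w => [|l w IH] p //.
by rewrite winv_cons act_word_cat !act_word_cons act_letterK IH.
Qed.

Lemma act_wordKV w : cancel (act_word (winv w)) (act_word w).
Proof. by move=> p; rewrite -{1}(winvK w) act_wordK. Qed.

(** * Freeness of Delta *)

Definition reduced (w : word) : bool := sorted (fun l1 l2 => l2 != linv l1) w.

Lemma not_reducedP w : ~~ reduced w -> exists u l v, w = u ++ l :: linv l :: v.
Proof.
elim: w => [|l1 w IH] //; case: w IH => [|l2 w] IH //=.
case: eqP => [->|_] /= Hw; first by exists [::], l1, w.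
by have [u [l [v ->]]] := IH Hw; exists (l1 :: u), l, v.
Qed.

(* Ping-pong: a reduced word starting with [l] sends the seed vector of its
   last letter into the open cone of [l], and the seeds lie in no cone. *)
Definition cone (l : bool * bool) (p : int * int) : Prop :=
  let: (x, y) := p in
  match l with
  | (false, false) => (0 < y < x) \/ (x < y < 0)
  | (false, true) => (0 < - y < x) \/ (x < - y < 0)
  | (true, false) => (0 < x < y) \/ (y < x < 0)
  | (true, true) => (0 < x < - y) \/ (- y < x < 0)
  end.

Definition seed (l : bool * bool) : int * int := if l.1 then (1, 0) else (0, 1).

Lemma cone_act_letter l l' p : l' != linv l -> cone l' p -> cone l (act_letter l p).
Proof. by case: l => [[] []]; case: l' => [[] []]; case: p => x y //= _; lia. Qed.

Lemma cone_act_seed l : cone l (act_letter l (seed l)).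
Proof. by case: l => [[] []] /=; lia. Qed.

Lemma seed_notin_cone l l' : ~ cone l (seed l').
Proof. by case: l => [[] []]; case: l' => [[] []] /=; lia. Qed.

Lemma pingpong l w : reduced (l :: w) -> cone l (act_word (l :: w) (seed (last l w))).
Proof.
elim: w l => [|l' w IH] l /=; first by move=> _; apply: cone_act_seed.
by case/andP=> ll' /IH; apply: cone_act_letter.
Qed.

Section WordEvaluation.

Variables (M : Type) (op : M -> M -> M) (one : M) (f : bool * bool -> M).
Hypotheses (opA : associative op) (op1m : left_id one op) (opm1 : right_id one op).
Hypothesis f_linv : forall l, op (f l) (f (linv l)) = one.

Definition word_eval (w : word) : M := foldr (fun l x => op (f l) x) one w.

Lemma word_eval_cons l w : word_eval (l :: w) = op (f l) (word_eval w).
Proof. by []. Qed.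

Lemma word_eval_cat u v : word_eval (u ++ v) = op (word_eval u) (word_eval v).
Proof. by elim: u => [|l u IH] /=; rewrite ?op1m // IH opA. Qed.

Lemma word_eval_cancel u l v : word_eval (u ++ l :: linv l :: v) = word_eval (u ++ v).
Proof.
by rewrite !word_eval_cat !word_eval_cons; congr (op _ _); rewrite opA f_linv op1m.
Qed.

Lemma word_eval_winvL w : op (word_eval (winv w)) (word_eval w) = one.
Proof.
elim: w => [|l w IH] /=; first by rewrite op1m.
rewrite winv_cons word_eval_cat !word_eval_cons opm1 -opA (opA (f (linv l))).
by rewrite -{2}(linvK l) f_linv op1m.
Qed.

(* Freeness of Delta: by ping-pong a word acting trivially is not reduced, so
   it cancels down to the empty word. *)
Lemma word_eval_act_id w : act_word w =1 id -> word_eval w = one.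
Proof.
elim: {w}(size w) {-2}w (leqnn (size w)) => [|k IH] [|l w] // le_wk act_id.
have [red_w | /not_reducedP[u [l' [v Ew]]]] := boolP (reduced (l :: w)).
  by have := pingpong red_w; rewrite act_id => /seed_notin_cone.
rewrite Ew word_eval_cancel; apply: IH => [|p].
  by move: le_wk; rewrite Ew !size_cat /=; lia.
by rewrite -(act_word_cancel u l') -Ew.
Qed.

Lemma word_eval_act_eq w1 w2 :
  act_word w1 =1 act_word w2 -> word_eval w1 = word_eval w2.
Proof.
move=> act12; have : word_eval (w1 ++ winv w2) = one.
  by apply: word_eval_act_id => p; rewrite act_word_cat act12 act_wordKV.
rewrite word_eval_cat => e12.
by rewrite -[word_eval w1]opm1 -(word_eval_winvL w2) opA e12 op1m.
Qed.

End WordEvaluation.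

Section Representations.

Variable n : nat.

Lemma letterH_linv l : letterH n l *m letterH n (linv l) = 1%:M.
Proof.
case: l => [[] []]; rewrite /= /aH /aHi /bH /bHi
  ?mulmxDl ?mulmxBl ?mulmxDr ?mulmxBr ?mul1mx ?mulmx1 ?mulNmx ?mulmxN.
all: by rewrite mul_delta_mx_0 // ?oppr0 ?addr0 ?addrK ?subrK.
Qed.

Lemma letterP_linv l : letterP n l + letterP n (linv l) = 0.
Proof. by case: l => [[] []]; congr pair; rewrite /= ?addrN ?addNr ?addr0. Qed.

Let mulmx3 := @mulmx 'Z_n 3 3 3.
Let mulmx3A : associative mulmx3 := @mulmxA _ 3 3 3 3.
Let mul1mx3 : left_id 1%:M mulmx3 := @mul1mx _ 3 3.
Let mulmx13 : right_id 1%:M mulmx3 := @mulmx1 _ 3 3.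

Lemma phiwE : phiw n =1 word_eval mulmx3 1%:M (letterH n).
Proof. by []. Qed.

Lemma psiwE : psiw n =1 word_eval +%R 0 (letterP n).
Proof. by []. Qed.

Lemma phiw_cat u v : phiw n (u ++ v) = phiw n u *m phiw n v.
Proof. by rewrite !phiwE (word_eval_cat (letterH n) mulmx3A mul1mx3). Qed.

Lemma psiw_cat u v : psiw n (u ++ v) = psiw n u + psiw n v.
Proof. by rewrite !psiwE (word_eval_cat (letterP n) (@addrA _) (@add0r _)). Qed.

Lemma phiw_winvL w : phiw n (winv w) *m phiw n w = 1%:M.
Proof. exact: (word_eval_winvL mulmx3A mul1mx3 mulmx13 letterH_linv). Qed.

Lemma psiw_winv w : psiw n (winv w) = - psiw n w.
Proof.
apply: (addIr (psiw n w)); rewrite addNr.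
exact: (word_eval_winvL (@addrA _) (@add0r _) (@addr0 _) letterP_linv).
Qed.

Lemma phiw_act_eq w1 w2 : act_word w1 =1 act_word w2 -> phiw n w1 = phiw n w2.
Proof. exact: (word_eval_act_eq mulmx3A mul1mx3 mulmx13 letterH_linv). Qed.

Lemma psiw_act_eq w1 w2 : act_word w1 =1 act_word w2 -> psiw n w1 = psiw n w2.
Proof. exact: (word_eval_act_eq (@addrA _) (@add0r _) (@addr0 _) letterP_linv). Qed.

End Representations.

(** * The stabiliser of the cusp 1 *)

Lemma sign_parity (j : nat) : exists t : nat,
  (j = (2 * t)%N /\ (-1) ^+ j = 1 :> int) \/ (j = (2 * t).+1 /\ (-1) ^+ j = -1 :> int).
Proof.
exists j./2; rewrite -signr_odd; have := odd_double_half j.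
by case: (odd j) => /= j_eq; [right | left]; rewrite ?expr0 ?expr1; split => //; lia.
Qed.

Lemma parabolic_classification (a b c d : int) :
  a * d - b * c = 1 -> (a %% 4 = 1)%Z -> (b %% 2 = 0)%Z -> a + b = c + d ->
  exists j : nat, let s := (-1) ^+ j in let m := 2 * j%:Z in
    (a = s * (1 - m) /\ b = s * m /\ c = - (s * m) /\ d = s * (1 + m)) \/
    (a = s * (1 + m) /\ b = - (s * m) /\ c = s * m /\ d = s * (1 - m)).
Proof.
move=> det a_mod4 b_even sum.
have [k b_eq] : exists k, b = 2 * k by exists (b %/ 2)%Z; lia.
have c_eq : c = a + b - d by lia.
have ab_unit : a + b \is a GRing.unit.
  by apply/unitrPr; exists (d - b); rewrite c_eq in det; lia.
have [j k_eq] : exists j : nat, k = j \/ k = - j%:Z.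
  by case: k {b_eq} => j; [exists j | exists j.+1]; lia.
exists j; have [t [[j_eq s_eq]|[j_eq s_eq]]] := sign_parity j; rewrite s_eq j_eq /=; lia.
Qed.

Lemma act_word_linear w x y : act_word w (x, y) =
  (x * (act_word w (1, 0)).1 + y * (act_word w (0, 1)).1,
   x * (act_word w (1, 0)).2 + y * (act_word w (0, 1)).2).
Proof.
elim: w => [|l w IH] /=; first by congr pair; ring.
rewrite IH; case: (act_word w (1, 0)) => a c; case: (act_word w (0, 1)) => b d.
by case: l => [[] []] /=; congr pair; ring.
Qed.

Lemma act_word_invariant w :
  let: (a, c) := act_word w (1, 0) in let: (b, d) := act_word w (0, 1) in
  [/\ a * d - b * c = 1, (a %% 4 = 1)%Z, (d %% 4 = 1)%Z, (b %% 2 = 0)%Z & (c %% 2 = 0)%Z].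
Proof.
elim: w => [|l w] //=.
case: (act_word w (1, 0)) => a c; case: (act_word w (0, 1)) => b d.
by case: l => [[] []] /= [*]; split; lia.
Qed.

(* q = b a^-1 has matrix (1, -2; 2, -3), minus a parabolic fixing (1 : 1). *)
Definition qword : word := [:: (true, false); (false, true)].
Definition qpow (j : nat) : word := iter j (cat qword) [::].
Definition qpowN (j : nat) : word := iter j (cat (winv qword)) [::].

Lemma act_qpow j x y : act_word (qpow j) (x, y) =
  ((-1) ^+ j * ((1 - 2 * j%:Z) * x + 2 * j%:Z * y),
   (-1) ^+ j * (- (2 * j%:Z) * x + (1 + 2 * j%:Z) * y)).
Proof.
elim: j => [|j IH]; first by congr pair; ring.
by rewrite /qpow iterS -/(qpow j) act_word_cat IH exprS intS /=; congr pair; ring.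
Qed.

Lemma act_qpowN j x y : act_word (qpowN j) (x, y) =
  ((-1) ^+ j * ((1 + 2 * j%:Z) * x - 2 * j%:Z * y),
   (-1) ^+ j * (2 * j%:Z * x + (1 - 2 * j%:Z) * y)).
Proof.
elim: j => [|j IH]; first by congr pair; ring.
by rewrite /qpowN iterS -/(qpowN j) act_word_cat IH exprS intS /=; congr pair; ring.
Qed.

Definition cross (p q : int * int) : int := p.1 * q.2 - p.2 * q.1.

Lemma act_word_cross w p q : cross (act_word w p) (act_word w q) = cross p q.
Proof.
elim: w => [|l w IH] //=; rewrite -IH /cross.
by case: l => [[] []] /=; ring.
Qed.

Lemma cusp1_stabiliser w : cross (act_word w (1, 1)) (1, 1) = 0 ->
  exists j, act_word w =1 act_word (qpow j) \/ act_word w =1 act_word (qpowN j).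
Proof.
have := act_word_invariant w; rewrite /cross [act_word w (1, 1)]act_word_linear.
case Ea: (act_word w (1, 0)) => [a c]; case Eb: (act_word w (0, 1)) => [b d] /=.
case=> det a_mod4 _ b_even _ fix1; have sum : a + b = c + d by lia.
have [j [E|E]] := parabolic_classification det a_mod4 b_even sum; exists j.
  left => -[x y]; rewrite act_word_linear Ea Eb act_qpow /=.
  by case: E => -> [-> [-> ->]]; congr pair; ring.
right => -[x y]; rewrite act_word_linear Ea Eb act_qpowN /=.
by case: E => -> [-> [-> ->]]; congr pair; ring.
Qed.

(** * The image of q in the Heisenberg group *)

Lemma expr_1Dnil3 (R : pzRingType) (N : R) j : N * N * N = 0 ->
  (1 + N) ^+ j = 1 + N *+ j + (N * N) *+ 'C(j, 2).
Proof.
move=> N3; elim: j => [|j IH]; first by rewrite expr0 !mulr0n !addr0.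
rewrite exprSr IH !mulrDl !mulrDr !mul1r !mulr1 !mulrnAl N3 mul0rn addr0.
by rewrite binS bin1 mulrnDr mulrS !addrA [RHS]addrAC.
Qed.

Lemma bin2_even_not_dvd n : (0 < n)%N -> ~~ odd n -> ~~ (n %| 'C(n, 2))%N.
Proof.
move=> n_gt0 n_even; have n_eq : n = n./2.*2.
  by rewrite -[LHS]odd_double_half (negbTE n_even).
move: n_gt0; rewrite n_eq; case: n./2 => [|m] // _.
rewrite bin2 -doubleMl doubleK -[in X in (X %| _)%N]muln2 dvdn_pmul2l //.
by rewrite doubleS /= dvdn2 /= odd_double.
Qed.

Lemma Zp_nat_eq0 n k : (1 < n)%N -> ((k%:R : 'Z_n) == 0) = (n %| k)%N.
Proof. by move=> n_gt1; rewrite -val_eqE /= val_Zp_nat. Qed.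

Lemma Zp_mulrn_dvd n (V : lmodType 'Z_n) (v : V) k :
  (1 < n)%N -> (n %| k)%N -> v *+ k = 0.
Proof.
by move=> n_gt1; rewrite -scaler_nat -Zp_nat_eq0 // => /eqP->; rewrite scale0r.
Qed.

Section HeisenbergParabolic.

Variable n : nat.
Hypothesis n_gt1 : (1 < n)%N.

Let Nq : 'M['Z_n]_3 := delta_mx 1 2 - delta_mx 0 1.
Definition qH : 'M['Z_n]_3 := phiw n qword.

Let qH_1DN : qH = 1 + Nq.
Proof.
rewrite /qH /Nq /= /bH /aHi mulmx1 mulmxDl mulmxBr !mul1mx mulmxBr mulmx1.
by rewrite mul_delta_mx_0 // subr0 addrAC -addrA.
Qed.

Let Nq2 : Nq * Nq = - delta_mx 0 2.
Proof.
rewrite /Nq -mulmxE mulmxBl !mulmxBr !mul_delta_mx !mul_delta_mx_0 //.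
by rewrite !subr0 sub0r.
Qed.

Let qH_expr k : qH ^+ k = 1 + Nq *+ k + (Nq * Nq) *+ 'C(k, 2).
Proof.
rewrite qH_1DN expr_1Dnil3 // Nq2 /Nq -!mulmxE mulNmx mulmxBr.
by rewrite !mul_delta_mx_0 // subr0 oppr0.
Qed.

Lemma qH_expr01 k : (qH ^+ k) 0 1 = - k%:R.
Proof.
rewrite qH_expr Nq2 /Nq !mxE !mulmxnE !mxE /=.
by rewrite sub0r mulNrn oppr0 mul0rn !addr0 add0r.
Qed.

Lemma qH_expr02 k : (qH ^+ k) 0 2 = - 'C(k, 2)%:R.
Proof.
by rewrite qH_expr Nq2 /Nq !mxE !mulmxnE !mxE /= subrr mul0rn mulNrn !add0r.
Qed.

Lemma qH_expr_eq1 k : qH ^+ k = 1 -> (n %| k)%N /\ (n %| 'C(k, 2))%N.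
Proof.
move=> qHk; have := qH_expr01 k; have := qH_expr02 k; rewrite qHk !mxE /=.
move=> /eqP; rewrite eq_sym oppr_eq0 Zp_nat_eq0 // => ->.
by move=> /eqP; rewrite eq_sym oppr_eq0 Zp_nat_eq0.
Qed.

Lemma qH_order : qH ^+ (2 * n) = 1.
Proof.
rewrite qH_expr !(Zp_mulrn_dvd _ n_gt1) ?addr0 ?dvdn_mull //.
by rewrite bin2 mul2n -doubleMl doubleK dvdn_mulr.
Qed.

Lemma qH_expr_inj i j : ~~ odd n -> (i < 2 * n)%N -> (j < 2 * n)%N ->
  qH ^+ i = qH ^+ j -> i = j.
Proof.
move=> n_even; wlog le_ij : i j / (i <= j)%N.
  move=> IH lt_i lt_j eq_ij.
  by case: (leqP i j) => [le_ij | /ltnW le_ji]; [exact: IH | exact/esym/IH].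
move=> _ lt_j eq_ij; have le_i2n : (i <= 2 * n)%N.
  exact: ltnW (leq_ltn_trans le_ij lt_j).
have qHi_unit : qH ^+ i \is a GRing.unit.
  apply/unitrP; exists (qH ^+ (2 * n - i)).
  by rewrite -!exprD subnK // addnC subnK // qH_order.
have : qH ^+ (j - i) = 1 by apply: (mulrI qHi_unit); rewrite -exprD subnKC // mulr1.
case/qH_expr_eq1 => /dvdnP[q ji_eq] n_dvd_bin.
have [q0 | q1] : q = 0%N \/ q = 1%N by nia.
  by move: ji_eq; rewrite q0; lia.
move: n_dvd_bin; rewrite ji_eq q1 mul1n => n_dvd_bin.
by move: (bin2_even_not_dvd (ltnW n_gt1) n_even); rewrite n_dvd_bin.
Qed.

Lemma phiw_qpow k : phiw n (qpow k) = qH ^+ k.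
Proof.
elim: k => [|k IH]; first by rewrite expr0.
by rewrite /qpow iterS -/(qpow k) phiw_cat IH exprS mulmxE.
Qed.

Lemma phiw_qpowN k : phiw n (qpowN k) = qH ^+ ((2 * n).-1 * k).
Proof.
have qH_inv : phiw n (winv qword) = qH ^+ (2 * n).-1.
  have := phiw_winvL n qword; rewrite mulmxE -/qH => qH_invL.
  have two_n : (2 * n = (2 * n).-1.+1)%N by lia.
  by rewrite -[LHS]mulr1 -qH_order {1}two_n exprS mulrA qH_invL mul1r.
elim: k => [|k IH]; first by rewrite muln0 expr0.
by rewrite /qpowN iterS -/(qpowN k) phiw_cat IH qH_inv mulmxE -exprD mulnS.
Qed.

End HeisenbergParabolic.

Lemma psiw_qpow n k : psiw n (qpow k) = (- k%:R, k%:R).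
Proof.
elim: k => [|k IH]; first by rewrite /= oppr0.
rewrite /qpow iterS -/(qpow k) psiw_cat IH.
by congr pair; rewrite /= !mulrS; ring.
Qed.

Lemma psiw_qpowN n k : psiw n (qpowN k) = (k%:R, - k%:R).
Proof.
elim: k => [|k IH]; first by rewrite /= oppr0.
rewrite /qpowN iterS -/(qpowN k) psiw_cat IH.
by congr pair; rewrite /= !mulrS; ring.
Qed.

(** * Stabilisers of the cusps above infinity *)

Definition conjH n (w0 : word) (A : 'M['Z_n]_3) : 'M['Z_n]_3 :=
  phiw n w0 *m A *m phiw n (winv w0).

Definition wconj (w0 w : word) : word := w0 ++ w ++ winv w0.

Lemma conjH_inj n w0 : injective (@conjH n w0).
Proof.
move=> A B /(congr1 (fun M => phiw n (winv w0) *m M *m phiw n w0)).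
by rewrite /conjH !mulmxA phiw_winvL !mul1mx -!mulmxA phiw_winvL !mulmx1.
Qed.

Lemma phiw_wconj n w0 w : phiw n (wconj w0 w) = conjH w0 (phiw n w).
Proof. by rewrite !phiw_cat mulmxA. Qed.

Lemma psiw_wconj n w0 w : psiw n (wconj w0 w) = psiw n w.
Proof. by rewrite !psiw_cat psiw_winv addrCA addrN addr0. Qed.

Lemma cusp_infE : cusp_inf = colv (1, 1).
Proof. by apply/matrixP => i j; rewrite !mxE; case: ifP. Qed.

Lemma fixes_conjE w0 w : fixes (evalD w) (evalD w0 *m cusp_inf) =
  (cross (act_word (winv w0 ++ w ++ w0) (1, 1)) (1, 1) == 0).
Proof.
rewrite /fixes cusp_infE !evalD_colv !mxE /= -subr_eq0 !act_word_cat.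
by rewrite -[X in cross _ X](act_wordK w0) act_word_cross.
Qed.

Lemma fixes_wconj_qpow w0 k : fixes (evalD (wconj w0 (qpow k))) (evalD w0 *m cusp_inf).
Proof.
rewrite fixes_conjE /wconj !act_word_cat !act_wordK act_qpow.
by apply/eqP; rewrite /cross /=; ring.
Qed.

Lemma cusp_stabiliser_phiw n w0 w : (1 < n)%N ->
  fixes (evalD w) (evalD w0 *m cusp_inf) ->
  exists k, phiw n w = conjH w0 (qH n ^+ k) /\ (psiw n w = (0, 0) -> (n %| k)%N).
Proof.
move=> n_gt1; rewrite fixes_conjE => /eqP/cusp1_stabiliser[j act_j].
have w_eq : act_word w =1 act_word (wconj w0 (winv w0 ++ w ++ w0)).
  by move=> p; rewrite /wconj !act_word_cat !act_wordKV.
rewrite (phiw_act_eq n w_eq) (psiw_act_eq n w_eq) phiw_wconj psiw_wconj.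
case: act_j => act_j; rewrite (phiw_act_eq n act_j) (psiw_act_eq n act_j).
  exists j; rewrite phiw_qpow psiw_qpow; split=> // /(congr1 snd) /= /eqP.
  by rewrite Zp_nat_eq0.
exists ((2 * n).-1 * j)%N; rewrite (phiw_qpowN n_gt1) psiw_qpowN.
split=> // /(congr1 fst) /= /eqP.
by rewrite Zp_nat_eq0 // => /dvdn_mull->.
Qed.

Lemma cusp_stabiliser_imageP n w0 x : (1 < n)%N ->
  (exists w, fixes (evalD w) (evalD w0 *m cusp_inf) /\ phiw n w = x) <->
  exists k, x = conjH w0 (qH n ^+ k).
Proof.
move=> n_gt1; split=> [[w [fix_w <-]] | [k ->]].
  by have [k [-> _]] := cusp_stabiliser_phiw n_gt1 fix_w; exists k.
exists (wconj w0 (qpow k)); rewrite phiw_wconj phiw_qpow.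
by split=> //; apply: fixes_wconj_qpow.
Qed.

Lemma cusp_stabiliser_kerpsi_imageP n w0 x : (1 < n)%N ->
  (exists w, fixes (evalD w) (evalD w0 *m cusp_inf) /\
     psiw n w = (0, 0) /\ phiw n w = x) <->
  exists k, x = conjH w0 (qH n ^+ (k * n)).
Proof.
move=> n_gt1; split=> [[w [fix_w [psi_w <-]]] | [k ->]].
  have [k [-> /(_ psi_w) /dvdnP[q ->]]] := cusp_stabiliser_phiw n_gt1 fix_w.
  by exists q.
exists (wconj w0 (qpow (k * n))); rewrite phiw_wconj phiw_qpow psiw_wconj psiw_qpow.
by rewrite natrM pchar_Zp // mulr0 oppr0; split=> //; apply: fixes_wconj_qpow.
Qed.

Lemma has_card_range (T : finType) (P : T -> Prop) (h : nat -> T) m :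
  (0 < m)%N -> (forall k, h (k %% m)%N = h k) ->
  (forall i j, (i < m)%N -> (j < m)%N -> h i = h j -> i = j) ->
  (forall x, P x <-> exists k, x = h k) -> has_card P m.
Proof.
move=> m_gt0 h_mod h_inj P_h; exists [set h (val i) | i : 'I_m]; split.
  move=> x; rewrite P_h; split=> [/imsetP[i _ ->] | [k ->]]; first by exists i.
  by apply/imsetP; exists (Ordinal (ltn_pmod k m_gt0)); rewrite //= h_mod.
rewrite card_imset ?card_ord // => i j /(h_inj _ _ (ltn_ord i) (ltn_ord j)).
exact: val_inj.
Qed.

Unset Implicit Arguments.

Theorem mainTheorem6 (n : nat) (hn : (2 <= n)%N) (heven : ~~ odd n) :
  forall w0 : word,
    ram_C_F n (evalD w0 *m cusp_inf) 2 /\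
    ram_C_P1 n (evalD w0 *m cusp_inf) (2 * n).
Proof.
move=> w0; have n_gt0 : (0 < n)%N by apply: ltnW.
split.
- apply: (has_card_range (h := fun k => conjH w0 (qH n ^+ (k * n)))) => //.
  + by move=> k; rewrite muln_modl (expr_mod _ (qH_order hn)).
  + move=> i j lt_i lt_j /conjH_inj /(qH_expr_inj hn heven) ij.
    by apply/eqP; rewrite -(eqn_pmul2r n_gt0) ij ?ltn_pmul2r.
  + by move=> x; apply: cusp_stabiliser_kerpsi_imageP.
- apply: (has_card_range (h := fun k => conjH w0 (qH n ^+ k))) => //.
  + by rewrite muln_gt0.
  + by move=> k; rewrite (expr_mod _ (qH_order hn)).
  + by move=> i j lt_i lt_j /conjH_inj /(qH_expr_inj hn heven); apply.
  + by move=> x; apply: cusp_stabiliser_imageP.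
Qed.
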